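(* Let $(N,+,* )$ be a planar nearring presented by $(\Phi,R,M)$, and let $d\in D(N)$ be nonzero and not a zero multiplier. Then $d\Phi^*=d\Phi\cup\{0\}$ is a subnearring of $N$ which is a planar nearfield (with multiplicative identity $r_d$).
   Context: A (right) nearring $(N,+,* )$ is a set with a group $(N,+)$, a semigroup $(N,* )$, and right distributivity $(a+b)*c=a*c+b*c$. $N$ is planar if the relation $a\cong b$ ($x*a=x*b$ for all $x$) has at least $3$ classes and for all $a,b,c$ with $a\not\cong b$ the equation $x*a=x*b+c$ has a unique solution. A nearfield is a nearring in which $(N\setminus\{0\},* )$ is a group; a subnearring is a subset closed under $+$, additive inverses and $*$. Every planar nearring arises as follows, and we always consider it so presented. $\Phi\le \mathrm{Aut}(N,+)$ acts on the right, is fixed point free, and $n\mapsto -n+n\phi$ is bijective for each $\phi\ne\mathrm{id}$. $R$ is a set of representatives of the $\Phi$-orbits of $N\setminus\{0\}$ and $M\subseteq R$. Each $a\ne0$ is uniquely $a=r_a\phi_a$, $r_a\in R$, $\phi_a\in\Phi$. Multiplication: $a*b=0$ if $b=0$ or $r_b\in M$, else $a*b=a\phi_b$ (and $0*b=0$). The zero multipliers are the elements of $M\Phi\cup\{0\}$, i.e. those $n$ with $x*n=0$ for all $x$. $D(N)=\{n: n*(a+b)=n*a+n*b\ \forall a,b\}$. *)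

From Stdlib Require Import Classical.
Set Implicit Arguments.

Section Defs.
Variable N : Type.
Variables (add : N -> N -> N) (zero : N) (opp : N -> N).

Definition group_ax : Prop :=
  (forall a b c, add a (add b c) = add (add a b) c) /\
  (forall a, add zero a = a /\ add a zero = a) /\
  (forall a, add (opp a) a = zero /\ add a (opp a) = zero).

Definition bij (f : N -> N) : Prop :=
  (forall x y, f x = f y -> x = y) /\ (forall y, exists x, f x = y).

Definition is_aut (f : N -> N) : Prop :=
  bij f /\ forall a b, f (add a b) = add (f a) (f b).

(* Phi <= Aut(N,+) is a subgroup (functions considered up to pointwise equality);
   elements act on the right: n phi := phi n. *)
Definition aut_subgroup (Phi : (N -> N) -> Prop) : Prop :=
  (forall f, Phi f -> is_aut f) /\
  (exists f, Phi f /\ forall x, f x = x) /\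
  (forall f g, Phi f -> Phi g -> exists h, Phi h /\ forall x, h x = g (f x)) /\
  (forall f, Phi f -> exists g, Phi g /\ forall x, g (f x) = x /\ f (g x) = x).

Definition ferrero_group (Phi : (N -> N) -> Prop) : Prop :=
  aut_subgroup Phi /\
  (forall f n, Phi f -> f n = n -> n = zero \/ forall x, f x = x) /\
  (forall f, Phi f -> (exists x, f x <> x) -> bij (fun n => add (opp n) (f n))).

Definition orbit_reps (Phi : (N -> N) -> Prop) (R M : N -> Prop) : Prop :=
  (forall r, R r -> r <> zero) /\
  (forall a, a <> zero -> exists r f, R r /\ Phi f /\ a = f r) /\
  (forall r1 r2 f1 f2, R r1 -> R r2 -> Phi f1 -> Phi f2 -> f1 r1 = f2 r2 -> r1 = r2) /\
  (forall r, M r -> R r).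

Definition presented_mul (Phi : (N -> N) -> Prop) (R M : N -> Prop)
  (mul : N -> N -> N) : Prop :=
  (forall a, mul a zero = zero) /\
  (forall a b r f, R r -> Phi f -> b = f r ->
     (M r -> mul a b = zero) /\ (~ M r -> mul a b = f a)).

(* The notions below are relative to a subset S of N (S = everything for N itself). *)
Variable mul : N -> N -> N.

Definition nearring_on (S : N -> Prop) : Prop :=
  S zero /\
  (forall a b, S a -> S b -> S (add a b)) /\
  (forall a, S a -> S (opp a)) /\
  (forall a b, S a -> S b -> S (mul a b)) /\
  (forall a b c, S a -> S b -> S c -> add a (add b c) = add (add a b) c) /\
  (forall a, S a -> add zero a = a /\ add a zero = a) /\
  (forall a, S a -> add (opp a) a = zero /\ add a (opp a) = zero) /\
  (forall a b c, S a -> S b -> S c -> mul a (mul b c) = mul (mul a b) c) /\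
  (forall a b c, S a -> S b -> S c -> mul (add a b) c = add (mul a c) (mul b c)).

Definition mequiv (S : N -> Prop) (a b : N) : Prop :=
  forall x, S x -> mul x a = mul x b.

Definition planar_on (S : N -> Prop) : Prop :=
  nearring_on S /\
  (exists a b c, S a /\ S b /\ S c /\
     ~ mequiv S a b /\ ~ mequiv S a c /\ ~ mequiv S b c) /\
  (forall a b c, S a -> S b -> S c -> ~ mequiv S a b ->
     exists x, S x /\ mul x a = add (mul x b) c /\
       forall y, S y -> mul y a = add (mul y b) c -> y = x).

Definition subnearring (S : N -> Prop) : Prop :=
  S zero /\
  (forall a b, S a -> S b -> S (add a b)) /\
  (forall a, S a -> S (opp a)) /\
  (forall a b, S a -> S b -> S (mul a b)).

Definition nearfield_on (S : N -> Prop) : Prop :=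
  nearring_on S /\
  (forall a b, S a -> S b -> a <> zero -> b <> zero -> mul a b <> zero) /\
  (exists e, S e /\ e <> zero /\
     forall x, S x -> x <> zero ->
       mul e x = x /\ mul x e = x /\
       exists y, S y /\ y <> zero /\ mul x y = e /\ mul y x = e).

Definition distributive_elt (d : N) : Prop :=
  forall a b, mul d (add a b) = add (mul d a) (mul d b).

Definition zero_multiplier (n : N) : Prop := forall x, mul x n = zero.

End Defs.

Definition orbit0 {N : Type} (zero : N) (Phi : (N -> N) -> Prop) (d : N) : N -> Prop :=
  fun x => x = zero \/ exists f, Phi f /\ x = f d.

(* Every element of d Phi is r_d phi for some phi, and r_d lies outside M, so right multiplication
   by r_d phi is just phi: the set d Phi u {0} = r_d Phi u {0} is closed under products, r_d is a
   two-sided identity on it and r_d phi^-1 inverts r_d phi. Since d is distributive, this set is the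
   image of x |-> d*x, hence an additive subgroup; and d*x0, for x0 a solution of x*a = x*b + c' in
   N with c = d*c', solves the planar equation inside it. *)
From Stdlib Require Import Classical FunctionalExtensionality PropExtensionality.

Set Implicit Arguments.
Unset Strict Implicit.

Section NearringBasics.
Variables (N : Type) (add : N -> N -> N) (zero : N) (opp : N -> N).
Hypothesis Hgrp : group_ax add zero opp.

Lemma add_idem_eq_zero x : add x x = x -> x = zero.
Proof.
  destruct Hgrp as [Hassoc [Hid Hinv]]; intros Hx.
  transitivity (add (add (opp x) x) x).
  - rewrite (proj1 (Hinv x)); symmetry; apply Hid.
  - rewrite <- Hassoc, Hx; apply Hinv.
Qed.

Lemma opp_unique u v : add u v = zero -> v = opp u.
Proof.
  destruct Hgrp as [Hassoc [Hid Hinv]]; intros Huv.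
  transitivity (add (add (opp u) u) v).
  - rewrite (proj1 (Hinv u)); symmetry; apply Hid.
  - rewrite <- Hassoc, Huv; apply Hid.
Qed.

Lemma aut_zero f : is_aut add f -> f zero = zero.
Proof.
  intros [_ Hf]; apply add_idem_eq_zero.
  rewrite <- Hf, (proj1 (proj1 (proj2 Hgrp) zero)); reflexivity.
Qed.

Lemma aut_eq_zero f x : is_aut add f -> f x = zero -> x = zero.
Proof.
  intros Hf Hfx; apply (proj1 (proj1 Hf)).
  rewrite Hfx; symmetry; exact (aut_zero Hf).
Qed.

Variable mul : N -> N -> N.

Lemma nearring_on_subnearring (S : N -> Prop) :
  nearring_on add zero opp mul (fun _ => True) ->
  subnearring add zero opp mul S -> nearring_on add zero opp mul S.
Proof.
  intros [_ [_ [_ [_ [Hassoc [Hid [Hinv [Hmassoc Hdist]]]]]]]] [H0 [Hadd [Hopp Hmul]]].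
  repeat split; auto; intros;
    solve [ apply Hassoc; exact I | apply Hid; exact I | apply Hinv; exact I
          | apply Hmassoc; exact I | apply Hdist; exact I ].
Qed.

End NearringBasics.

Section Orbits.
Variables (N : Type) (add : N -> N -> N) (zero : N) (Phi : (N -> N) -> Prop).
Hypothesis HPhi : aut_subgroup add Phi.

Lemma orbit0_refl a : orbit0 zero Phi a a.
Proof.
  destruct HPhi as [_ [[e [He Hid]] _]].
  right; exists e; split; [exact He | symmetry; apply Hid].
Qed.

Lemma orbit0_shift f a : Phi f -> orbit0 zero Phi (f a) = orbit0 zero Phi a.
Proof.
  destruct HPhi as [_ [_ [Hcomp Hinv]]]; intros Hf.
  apply functional_extensionality; intros x; apply propositional_extensionality.
  split; intros [Hx | [g [Hg Hx]]]; try (left; exact Hx); right.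
  - destruct (Hcomp f g Hf Hg) as [h [Hh Hgf]].
    exists h; split; [exact Hh | rewrite Hgf; exact Hx].
  - destruct (Hinv f Hf) as [finv [Hfinv Hff]].
    destruct (Hcomp finv g Hfinv Hg) as [h [Hh Hgf]].
    exists h; split; [exact Hh | rewrite Hgf, (proj1 (Hff a)); exact Hx].
Qed.

End Orbits.

Section PresentedMul.
Variables (N : Type) (zero : N) (mul : N -> N -> N).
Variables (Phi : (N -> N) -> Prop) (R M : N -> Prop).
Hypothesis HRM : orbit_reps zero Phi R M.
Hypothesis Hmul : presented_mul zero Phi R M mul.

Lemma mul_orbit_rep r h a : R r -> ~ M r -> Phi h -> mul a (h r) = h a.
Proof.
  intros Hr HnM Hh; exact (proj2 (proj2 Hmul a (h r) r h Hr Hh eq_refl) HnM).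
Qed.

Lemma not_zero_multiplier_rep r f d :
  R r -> Phi f -> d = f r -> ~ zero_multiplier zero mul d -> ~ M r.
Proof.
  intros Hr Hf Hd Hdz HM; apply Hdz; intros x.
  exact (proj1 (proj2 Hmul x d r f Hr Hf Hd) HM).
Qed.

Lemma mul_in_orbit0 a y : orbit0 zero Phi a (mul a y).
Proof.
  destruct (classic (y = zero)) as [-> | Hy]; [left; apply Hmul|].
  destruct (proj1 (proj2 HRM) y Hy) as [r [k [Hr [Hk Hyk]]]].
  destruct (proj2 Hmul a y r k Hr Hk Hyk) as [HM HnM].
  destruct (classic (M r)) as [Hm | Hm].
  - left; exact (HM Hm).
  - right; exists k; split; [exact Hk | exact (HnM Hm)].
Qed.

Lemma orbit0_in_image a r s :
  R r -> ~ M r -> orbit0 zero Phi a s -> exists y, s = mul a y.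
Proof.
  intros Hr HnM [Hs | [f [Hf Hs]]].
  - exists zero; rewrite (proj1 Hmul); exact Hs.
  - exists (f r); rewrite (mul_orbit_rep a Hr HnM Hf); exact Hs.
Qed.

(* With Phi trivial every element acts on the right as the identity or as 0, leaving at most two
   classes. *)
Lemma three_classes_Phi_nontrivial :
  (exists a b c, ~ mequiv mul (fun _ => True) a b /\ ~ mequiv mul (fun _ => True) a c /\
                 ~ mequiv mul (fun _ => True) b c) ->
  exists f x, Phi f /\ f x <> x.
Proof.
  intros [a [b [c [Hab [Hac Hbc]]]]]; apply NNPP; intros Htriv.
  assert (Hdich : forall u, (forall x, mul x u = x) \/ zero_multiplier zero mul u).
  { intros u; destruct (classic (u = zero)) as [-> | Hu]; [right; intros x; apply Hmul|].
    destruct (proj1 (proj2 HRM) u Hu) as [r [k [Hr [Hk Huk]]]].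
    destruct (classic (M r)) as [HM | HnM].
    - right; intros x; exact (proj1 (proj2 Hmul x u r k Hr Hk Huk) HM).
    - left; intros x; rewrite (proj2 (proj2 Hmul x u r k Hr Hk Huk) HnM).
      apply NNPP; intros Hkx; apply Htriv; exists k, x; split; assumption. }
  destruct (Hdich a) as [Ha | Ha]; destruct (Hdich b) as [Hb | Hb];
    destruct (Hdich c) as [Hc | Hc];
    first [ apply Hab; intros x _; rewrite Ha, Hb; reflexivity
          | apply Hac; intros x _; rewrite Ha, Hc; reflexivity
          | apply Hbc; intros x _; rewrite Hb, Hc; reflexivity ].
Qed.

End PresentedMul.

Section OrbitNearfield.
Variables (N : Type) (add : N -> N -> N) (zero : N) (opp : N -> N) (mul : N -> N -> N).
Variables (Phi : (N -> N) -> Prop) (R M : N -> Prop).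
Hypothesis Hgrp : group_ax add zero opp.
Hypothesis HPhi : ferrero_group add zero opp Phi.
Hypothesis HRM : orbit_reps zero Phi R M.
Hypothesis Hmul : presented_mul zero Phi R M mul.
Variable r : N.
Hypotheses (Hr : R r) (HnM : ~ M r).

Local Notation S := (orbit0 zero Phi r).

Lemma orbit0_mul_closed a b : S a -> S b -> S (mul a b).
Proof.
  destruct HPhi as [[Haut [_ [Hcomp _]]] _].
  intros Ha [-> | [h [Hh ->]]]; [left; apply Hmul|].
  rewrite (mul_orbit_rep Hmul a Hr HnM Hh).
  destruct Ha as [-> | [k [Hk ->]]]; [left; exact (aut_zero Hgrp (Haut h Hh))|].
  destruct (Hcomp k h Hk Hh) as [m [Hm Hkh]].
  right; exists m; split; [exact Hm | symmetry; apply Hkh].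
Qed.

Lemma orbit0_mul_left_id x : S x -> mul r x = x.
Proof.
  intros [-> | [h [Hh ->]]]; [apply Hmul | exact (mul_orbit_rep Hmul r Hr HnM Hh)].
Qed.

Lemma mul_right_id x : mul x r = x.
Proof.
  destruct HPhi as [[_ [[e [He Hid]] _]] _].
  rewrite <- (Hid r) at 1; rewrite (mul_orbit_rep Hmul x Hr HnM He); apply Hid.
Qed.

Lemma orbit0_mul_neq0 a b : S b -> a <> zero -> b <> zero -> mul a b <> zero.
Proof.
  intros [Hb | [h [Hh ->]]] Ha Hb0 Hab; [contradiction|].
  rewrite (mul_orbit_rep Hmul a Hr HnM Hh) in Hab.
  exact (Ha (aut_eq_zero Hgrp (proj1 (proj1 HPhi) h Hh) Hab)).
Qed.

Lemma orbit0_mul_inverse x :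
  S x -> x <> zero -> exists y, S y /\ y <> zero /\ mul x y = r /\ mul y x = r.
Proof.
  destruct HPhi as [[Haut [_ [_ Hinv]]] _].
  intros [Hx | [h [Hh ->]]] Hx0; [contradiction|].
  destruct (Hinv h Hh) as [g [Hg Hgh]].
  exists (g r); split; [right; exists g; split; [exact Hg | reflexivity]|].
  split; [intros Hg0; exact (proj1 HRM r Hr (aut_eq_zero Hgrp (Haut g Hg) Hg0))|].
  rewrite (mul_orbit_rep Hmul _ Hr HnM Hg), (mul_orbit_rep Hmul _ Hr HnM Hh).
  split; apply Hgh.
Qed.

Lemma orbit0_nearfield :
  nearring_on add zero opp mul S -> nearfield_on add zero opp mul S.
Proof.
  intros Hnr; split; [exact Hnr|]; split.
  - intros a b _ Hb; exact (orbit0_mul_neq0 Hb).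
  - exists r; split; [exact (orbit0_refl zero (proj1 HPhi) r)|].
    split; [exact (proj1 HRM r Hr)|].
    intros x Hx Hx0; split; [exact (orbit0_mul_left_id Hx)|].
    split; [apply mul_right_id | exact (orbit0_mul_inverse Hx Hx0)].
Qed.

Lemma mequiv_orbit0_eq a b : S a -> S b -> mequiv mul S a b -> a = b.
Proof.
  intros Ha Hb Hab.
  rewrite <- (orbit0_mul_left_id Ha), <- (orbit0_mul_left_id Hb).
  exact (Hab r (orbit0_refl zero (proj1 HPhi) r)).
Qed.

Hypothesis Hplanar : planar_on add zero opp mul (fun _ => True).

(* The three classes are those of 0, r and r phi for any phi <> id, which moves r since Phi is
   fixed point free. *)
Lemma orbit0_three_classes :
  exists a b c, S a /\ S b /\ S c /\
    ~ mequiv mul S a b /\ ~ mequiv mul S a c /\ ~ mequiv mul S b c.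
Proof.
  destruct HPhi as [[Haut _] [Hfpf _]].
  destruct Hplanar as [_ [[a [b [c [_ [_ [_ H3]]]]]] _]].
  destruct (three_classes_Phi_nontrivial HRM Hmul) as [f [x [Hf Hfx]]];
    [exists a, b, c; exact H3|].
  assert (Hr0 : r <> zero) by exact (proj1 HRM r Hr).
  assert (Hfr : f r <> r).
  { intros Hfr; destruct (Hfpf f r Hf Hfr) as [Hr0' | Hid];
      [exact (Hr0 Hr0') | exact (Hfx (Hid x))]. }
  assert (Hfr0 : f r <> zero) by (intros H; exact (Hr0 (aut_eq_zero Hgrp (Haut f Hf) H))).
  assert (HS0 : S zero) by (left; reflexivity).
  assert (HSr : S r) by exact (orbit0_refl zero (proj1 HPhi) r).
  assert (HSfr : S (f r)) by (right; exists f; split; [exact Hf | reflexivity]).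
  exists zero, r, (f r); repeat split; try assumption; intros Heq.
  - exact (Hr0 (eq_sym (mequiv_orbit0_eq HS0 HSr Heq))).
  - exact (Hfr0 (eq_sym (mequiv_orbit0_eq HS0 HSfr Heq))).
  - exact (Hfr (eq_sym (mequiv_orbit0_eq HSr HSfr Heq))).
Qed.

Variable d : N.
Hypothesis HdD : distributive_elt add mul d.

Local Notation Sd := (orbit0 zero Phi d).

Lemma orbit0_add_closed a b : Sd a -> Sd b -> Sd (add a b).
Proof.
  intros Ha Hb.
  destruct (orbit0_in_image Hmul Hr HnM Ha) as [y1 ->].
  destruct (orbit0_in_image Hmul Hr HnM Hb) as [y2 ->].
  rewrite <- HdD; exact (mul_in_orbit0 HRM Hmul d _).
Qed.

Lemma orbit0_opp_closed a : Sd a -> Sd (opp a).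
Proof.
  intros Ha; destruct (orbit0_in_image Hmul Hr HnM Ha) as [y ->].
  assert (Hsum : add (mul d y) (mul d (opp y)) = zero).
  { rewrite <- HdD, (proj2 (proj2 (proj2 Hgrp) y)); apply Hmul. }
  rewrite <- (opp_unique Hgrp Hsum); exact (mul_in_orbit0 HRM Hmul d _).
Qed.

Lemma orbit0_planar_solution a b c :
  Sd c -> ~ mequiv mul Sd a b ->
  exists x, Sd x /\ mul x a = add (mul x b) c /\
    forall y, Sd y -> mul y a = add (mul y b) c -> y = x.
Proof.
  destruct Hplanar as [[_ [_ [_ [_ [_ [_ [_ [Hassoc _]]]]]]]] [_ Hsol]].
  intros Hc Hab.
  assert (HabN : ~ mequiv mul (fun _ => True) a b)
    by (intros H; apply Hab; intros x _; exact (H x I)).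
  destruct (orbit0_in_image Hmul Hr HnM Hc) as [c' ->].
  destruct (Hsol a b c' I I I HabN) as [x0 [_ [Hx0 _]]].
  destruct (Hsol a b (mul d c') I I I HabN) as [x1 [_ [_ Hx1]]].
  assert (Hdx0 : mul (mul d x0) a = add (mul (mul d x0) b) (mul d c')).
  { rewrite <- !Hassoc by exact I; rewrite Hx0; apply HdD. }
  exists (mul d x0); split; [exact (mul_in_orbit0 HRM Hmul d x0)|].
  split; [exact Hdx0|].
  intros y _ Hy; rewrite (Hx1 y I Hy); symmetry; exact (Hx1 _ I Hdx0).
Qed.

End OrbitNearfield.

Theorem mainTheorem3 (N : Type) (add : N -> N -> N) (zero : N) (opp : N -> N)
  (mul : N -> N -> N) (Phi : (N -> N) -> Prop) (R M : N -> Prop)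
  (Hgrp : group_ax add zero opp)
  (HPhi : ferrero_group add zero opp Phi)
  (HRM : orbit_reps zero Phi R M)
  (Hmul : presented_mul zero Phi R M mul)
  (Hplanar : planar_on add zero opp mul (fun _ => True))
  (d : N)
  (HdD : distributive_elt add mul d)
  (Hd0 : d <> zero)
  (Hdz : ~ zero_multiplier zero mul d) :
  subnearring add zero opp mul (orbit0 zero Phi d) /\
  nearfield_on add zero opp mul (orbit0 zero Phi d) /\
  planar_on add zero opp mul (orbit0 zero Phi d) /\
  (forall r f, R r -> Phi f -> d = f r ->
     orbit0 zero Phi d r /\
     forall x, orbit0 zero Phi d x -> mul r x = x /\ mul x r = x).
Proof.
  destruct (proj1 (proj2 HRM) d Hd0) as [r [f0 [Hr [Hf0 Hdr]]]].
  pose proof (not_zero_multiplier_rep Hmul Hr Hf0 Hdr Hdz) as HnM.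
  assert (HS : orbit0 zero Phi d = orbit0 zero Phi r)
    by (rewrite Hdr; exact (orbit0_shift zero (proj1 HPhi) r Hf0)).
  assert (Hsub : subnearring add zero opp mul (orbit0 zero Phi d)).
  { split; [left; reflexivity|].
    split; [exact (orbit0_add_closed HRM Hmul Hr HnM HdD)|].
    split; [exact (orbit0_opp_closed Hgrp HRM Hmul Hr HnM HdD)|].
    rewrite HS; exact (orbit0_mul_closed Hgrp HPhi Hmul Hr HnM). }
  pose proof (nearring_on_subnearring (proj1 Hplanar) Hsub) as Hnr.
  split; [exact Hsub|]; split.
  { rewrite HS in Hnr |- *; exact (orbit0_nearfield Hgrp HPhi HRM Hmul Hr HnM Hnr). }
  split.
  { split; [exact Hnr|]; split.
    - rewrite HS; exact (orbit0_three_classes Hgrp HPhi HRM Hmul Hr HnM Hplanar).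
    - intros a b c _ _ Hc Hab.
      exact (orbit0_planar_solution HRM Hmul Hr HnM Hplanar HdD Hc Hab). }
  intros r1 f1 Hr1 Hf1 Hd1.
  assert (Hrr : r1 = r) by (apply (proj1 (proj2 (proj2 HRM)) r1 r f1 f0); congruence).
  subst r1; rewrite HS; split; [exact (orbit0_refl zero (proj1 HPhi) r)|].
  intros x Hx; split;
    [exact (orbit0_mul_left_id Hmul Hr HnM Hx) | exact (mul_right_id HPhi Hmul Hr HnM x)].
Qed.
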